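(* Let $\{(\phi^n,\mu^n,R^n,\xi^n)\}$ be generated by Scheme 1B and set $M:=R^0=\sqrt{E[\phi_{in}]}$. Then for all $n\ge0$: $0<R^{n+1}\le R^n\le M$ and $0<\xi^{n+1}\le \frac{M}{\sqrt{c_0}}$.
   Context: Standing setup: $\Omega\subset\mathbb{R}^d$ ($d=2,3$) is a bounded domain with smooth boundary and outward unit normal $\mathbf{n}$; $\|\cdot\|_0$ is the $L^2(\Omega)$ norm. Let $\lambda\ge 0$, $H(s)=\frac14(s^2-1)^2$, $h(s)=H'(s)=s^3-s$. Fix $c_0>0$ and define $E[\phi]=\int_\Omega\big(\tfrac12|\nabla\phi|^2+\tfrac{\lambda}{2}\phi^2+H(\phi)\big)dx+c_0$ (so $E[\phi]\ge c_0$). Time step $\Delta t>0$. Set $\phi^0=\phi_{in}$, $\mu^0=-\Delta\phi^0+\lambda\phi^0+h(\phi^0)$, $R^0=\sqrt{E[\phi^0]}$, $\xi^0=1$. Scheme 1B: for $n\ge0$, solve $\frac{\phi^{n+1}-\phi^n}{\Delta t}=\Delta\mu^{n+1}$, $\mu^{n+1}=-\Delta\phi^{n+1}+\lambda\phi^{n+1}+|\xi^{n}|^2h(\phi^n)$ with $\nabla\phi^{n+1}\cdot\mathbf{n}=\nabla\mu^{n+1}\cdot\mathbf{n}=0$ on $\partial\Omega$; then $\frac{R^{n+1}-R^n}{\Delta t}=-\frac{\xi^{n+1}}{2\sqrt{E[\phi^{n+1}]}}\int_\Omega|\nabla\mu^{n+1}|^2dx$ with $\xi^{n+1}=R^{n+1}/\sqrt{E[\phi^{n+1}]}$.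 *)

From HB Require Import structures.
From mathcomp Require Import all_boot all_order all_algebra.
From mathcomp Require Import all_classical all_reals all_analysis.
Set Implicit Arguments. Unset Strict Implicit. Unset Printing Implicit Defensive.
Import Order.TTheory GRing.Theory Num.Theory.
Import numFieldNormedType.Exports.
Local Open Scope classical_set_scope.
Local Open Scope ring_scope.

Section Defs.
Variable R : realType.

Definition evec (d : nat) (i : 'I_d) : 'rV[R]_d := delta_mx 0 i.

Definition pd (d : nat) (i : 'I_d) (f : 'rV[R]_d -> R) : 'rV[R]_d -> R :=
  fun x => derive f x (evec i).

Fixpoint pds (d : nat) (l : seq 'I_d) (f : 'rV[R]_d -> R) : 'rV[R]_d -> R :=
  match l with [::] => f | i :: l' => pd i (pds l' f) end.

Definition grad (d : nat) (f : 'rV[R]_d -> R) (x : 'rV[R]_d) : 'rV[R]_d :=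
  \row_(i < d) pd i f x.

Definition dotv (d : nat) (u v : 'rV[R]_d) : R := \sum_(i < d) u 0 i * v 0 i.
Definition sqnorm (d : nat) (u : 'rV[R]_d) : R := dotv u u.
Definition enorm (d : nat) (u : 'rV[R]_d) : R := Num.sqrt (sqnorm u).

Definition lap (d : nat) (f : 'rV[R]_d -> R) (x : 'rV[R]_d) : R :=
  \sum_(i < d) pd i (pd i f) x.

Definition C2 (d : nat) (f : 'rV[R]_d -> R) : Prop :=
  forall x, differentiable f x /\ forall i : 'I_d, differentiable (pd i f) x.

Definition smooth (d : nat) (f : 'rV[R]_d -> R) : Prop :=
  forall (l : seq 'I_d) x, differentiable (pds l f) x.

(* Omega is a bounded domain with smooth boundary, given by a global smooth
   defining function rho : Omega = {rho < 0}, grad rho <> 0 on {rho = 0}. *)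
Definition smooth_bounded_domain (d : nat) (Omega : set 'rV[R]_d)
    (rho : 'rV[R]_d -> R) : Prop :=
  [/\ Omega = [set x | rho x < 0], smooth rho,
      (forall x, rho x = 0 -> grad rho x != 0),
      bounded_set Omega & (Omega !=set0 /\ connected Omega)].

(* outward unit normal on the boundary *)
Definition normal (d : nat) (rho : 'rV[R]_d -> R) (x : 'rV[R]_d) : 'rV[R]_d :=
  (enorm (grad rho x))^-1 *: grad rho x.

(* Lebesgue integral over R^d as an iterated integral (Tonelli), used only for
   nonnegative integrands. *)
Fixpoint iint (n : nat) : ('rV[R]_n -> \bar R) -> \bar R :=
  match n return ('rV[R]_n -> \bar R) -> \bar R with
  | 0 => fun f => f 0
  | n'.+1 => fun f =>
      (\int[@lebesgue_measure R]_(t in setT)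
         iint (fun v : 'rV[R]_n' => f (row_mx (const_mx t : 'rV[R]_1) v)))%E
  end.

(* integral over Omega of a real function (nonnegative integrands only) *)
Definition intOm (d : nat) (Omega : set 'rV[R]_d) (g : 'rV[R]_d -> R) : \bar R :=
  iint (fun x => (if x \in Omega then g x else 0)%:E).

Definition Hpot (s : R) : R := (s ^+ 2 - 1) ^+ 2 / 4.
Definition hpot (s : R) : R := s ^+ 3 - s.

Definition energy (d : nat) (Omega : set 'rV[R]_d) (lam c0 : R)
    (phi : 'rV[R]_d -> R) : R :=
  fine (intOm Omega (fun x => sqnorm (grad phi x) / 2 + lam / 2 * phi x ^+ 2
                              + Hpot (phi x))) + c0.

End Defs.

From HB Require Import structures.
From mathcomp Require Import all_boot all_order all_algebra.
From mathcomp Require Import all_classical all_reals all_analysis.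
From mathcomp Require Import ring lra.
Set Implicit Arguments. Unset Strict Implicit. Unset Printing Implicit Defensive.
Import Order.TTheory GRing.Theory Num.Theory.
Import numFieldNormedType.Exports.
Local Open Scope classical_set_scope.
Local Open Scope ring_scope.

(* The proof only uses the scalar part of the scheme.  Two facts drive it:
   1. every integral appearing in the scheme has a nonnegative integrand, so
      E[phi] >= c0 > 0 and  G := int |grad mu^{n+1}|^2 >= 0;
   2. substituting  xi^{n+1} = R^{n+1} / S  (S := sqrt E[phi^{n+1}]) into the
      update for R gives  R^{n+1} (1 + dt G / (2 S^2)) = R^n,  so R^{n+1} is
      R^n divided by a factor >= 1: positivity is kept and R decreases.
   Induction then gives 0 < R^n <= R^0 = M for all n, and finally
   xi^{n+1} = R^{n+1} / S <= M / sqrt c0 because S >= sqrt c0. *)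

Lemma iint_ge0 (R : realType) (n : nat) (f : 'rV[R]_n -> \bar R) :
  (forall x, (0 <= f x)%E) -> (0 <= iint f)%E.
Proof.
elim: n f => [|n IH] f f_ge0 /=; first exact: f_ge0.
by apply: integral_ge0 => t _; apply: IH => v; apply: f_ge0.
Qed.

Lemma intOm_ge0 (R : realType) (d : nat) (Omega : set 'rV[R]_d)
    (g : 'rV[R]_d -> R) :
  (forall x, 0 <= g x) -> 0 <= fine (intOm Omega g).
Proof.
move=> g_ge0; apply/fine_ge0/iint_ge0 => x.
by case: ifP => _; rewrite lee_fin.
Qed.

Lemma sqnorm_ge0 (R : realType) (d : nat) (u : 'rV[R]_d) : 0 <= sqnorm u.
Proof. by apply: sumr_ge0 => i _; rewrite -expr2 sqr_ge0. Qed.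

(* The energy density is nonnegative when lam >= 0, so E[phi] >= c0. *)
Lemma energy_ge_c0 (R : realType) (d : nat) (Omega : set 'rV[R]_d)
    (lam c0 : R) (phi : 'rV[R]_d -> R) :
  0 <= lam -> c0 <= energy Omega lam c0 phi.
Proof.
move=> lam_ge0; rewrite /energy lerDr; apply: intOm_ge0 => x.
have grad_ge0 : 0 <= sqnorm (grad phi x) / 2 by rewrite divr_ge0 ?sqnorm_ge0.
have quad_ge0 : 0 <= lam / 2 * phi x ^+ 2 by rewrite mulr_ge0 ?divr_ge0 ?sqr_ge0.
have pot_ge0 : 0 <= Hpot (phi x) by rewrite divr_ge0 ?sqr_ge0.
by rewrite !addr_ge0.
Qed.

(* One step of the scalar update, with xi^{n+1} already replaced by r'/S:
   r' is r divided by 1 + dt G / (2 S^2) >= 1, hence 0 < r' <= r. *)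
Lemma sav_step (R : realFieldType) (r r' S G dt : R) :
  0 < S -> 0 <= G -> 0 < dt -> 0 < r ->
  (r' - r) / dt = - (r' / S / (2 * S)) * G -> 0 < r' /\ r' <= r.
Proof.
move=> S_gt0 G_ge0 dt_gt0 r_gt0 update.
pose k := dt * G / (2 * S ^+ 2).
have k_ge0 : 0 <= k by rewrite divr_ge0 ?mulr_ge0 ?sqr_ge0 // ltW.
have divided : r' * (1 + k) = r.
  have incr : r' - r = - (r' / S / (2 * S)) * G * dt.
    by rewrite -update mulfVK // gt_eqF.
  apply/eqP; rewrite -subr_eq0; apply/eqP.
  have -> : r' * (1 + k) - r = (r' - r) + r' / S / (2 * S) * G * dt.
    by rewrite /k; field; rewrite gt_eqF.
  by rewrite incr; ring.
split; nra.
Qed.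

Lemma positive_nonincreasing (R : realDomainType) (u : nat -> R) :
  0 < u 0%N -> (forall n, 0 < u n -> 0 < u n.+1 /\ u n.+1 <= u n) ->
  forall n, 0 < u n /\ u n <= u 0%N.
Proof.
move=> u0_gt0 step; elim=> [|n [un_gt0 un_le]]; first by [].
have [un1_gt0 un1_le] := step n un_gt0.
by split=> //; apply: le_trans un_le.
Qed.

Lemma quotient_bound (R : realFieldType) (r M S s0 : R) :
  0 < s0 -> s0 <= S -> 0 < r -> r <= M -> 0 < r / S /\ r / S <= M / s0.
Proof.
move=> s0_gt0 s0_le r_gt0 r_le; have S_gt0 := lt_le_trans s0_gt0 s0_le.
split; first exact: divr_gt0.
apply: le_trans (_ : r / s0 <= _).
  by rewrite ler_pM2l // lef_pV2 ?posrE.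
by rewrite ler_pM2r ?invr_gt0.
Qed.

Theorem mainTheorem7 (R : realType) (d : nat) (Omega : set 'rV[R]_d)
  (rho : 'rV[R]_d -> R) (lam c0 dt : R) (phi_in : 'rV[R]_d -> R)
  (phi mu : nat -> 'rV[R]_d -> R) (Rs xi : nat -> R) :
  (d = 2%N \/ d = 3%N) ->
  smooth_bounded_domain Omega rho ->
  0 <= lam -> 0 < c0 -> 0 < dt ->
  (* regularity of the iterates *)
  (forall n, C2 (phi n)) -> (forall n, C2 (mu n.+1)) ->
  (* initialization *)
  phi 0%N = phi_in ->
  (forall x, Omega x ->
     mu 0%N x = - lap (phi 0%N) x + lam * phi 0%N x + hpot (phi 0%N x)) ->
  Rs 0%N = Num.sqrt (energy Omega lam c0 (phi 0%N)) ->
  xi 0%N = 1 ->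
  (* Scheme 1B *)
  (forall n x, Omega x ->
     (phi n.+1 x - phi n x) / dt = lap (mu n.+1) x) ->
  (forall n x, Omega x ->
     mu n.+1 x = - lap (phi n.+1) x + lam * phi n.+1 x
                 + xi n ^+ 2 * hpot (phi n x)) ->
  (forall n x, (closure Omega `\` Omega) x ->
     dotv (grad (phi n.+1) x) (normal rho x) = 0 /\
     dotv (grad (mu n.+1) x) (normal rho x) = 0) ->
  (forall n,
     (Rs n.+1 - Rs n) / dt =
       - (xi n.+1 / (2 * Num.sqrt (energy Omega lam c0 (phi n.+1))))
         * fine (intOm Omega (fun x => sqnorm (grad (mu n.+1) x)))) ->
  (forall n, xi n.+1 = Rs n.+1 / Num.sqrt (energy Omega lam c0 (phi n.+1))) ->
  forall n : nat,
    let M := Rs 0%N in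
    (0 < Rs n.+1 /\ Rs n.+1 <= Rs n /\ Rs n <= M) /\
    (0 < xi n.+1 /\ xi n.+1 <= M / Num.sqrt c0).
Proof.
move=> _ _ lam_ge0 c0_gt0 dt_gt0 _ _ _ _ Rs0 _ _ _ _ update xiE.
have sqrt_c0_gt0 : 0 < Num.sqrt c0 by rewrite sqrtr_gt0.
have sqrtE_ge k : Num.sqrt c0 <= Num.sqrt (energy Omega lam c0 (phi k)).
  by rewrite ler_sqrt ?energy_ge_c0 // (le_trans (ltW c0_gt0)) ?energy_ge_c0.
have step k : 0 < Rs k -> 0 < Rs k.+1 /\ Rs k.+1 <= Rs k.
  move=> Rsk_gt0; have update_k := update k; rewrite xiE in update_k.
  have S_gt0 := lt_le_trans sqrt_c0_gt0 (sqrtE_ge k.+1).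
  have G_ge0 : 0 <= fine (intOm Omega (fun x => sqnorm (grad (mu k.+1) x))).
    by apply: intOm_ge0 => x; apply: sqnorm_ge0.
  exact: sav_step S_gt0 G_ge0 dt_gt0 Rsk_gt0 update_k.
have Rs0_gt0 : 0 < Rs 0%N by rewrite Rs0 (lt_le_trans sqrt_c0_gt0).
have bounded := positive_nonincreasing Rs0_gt0 step.
move=> n M; have [Rsn_gt0 Rsn_le] := bounded n.
have [Rsn1_gt0 Rsn1_le] := step n Rsn_gt0.
split; first by split; [|split].
rewrite xiE; apply: quotient_bound sqrt_c0_gt0 (sqrtE_ge n.+1) Rsn1_gt0 _.
exact: le_trans Rsn1_le Rsn_le.
Qed.
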